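(* Let $G$ be a tree on node set $V$, $\lambda>0$, and let $T_1,\dots,T_\ell$ be independent complete traces of the cascade process with $p=1$ and rate $\lambda$ on $G$ (with arbitrary sources). If $\{u,v\}$ is an edge of $G$, then Algorithm 1 sets $c(u,v)<\lambda^{-1}$ with probability at least $1-c_1^{\ell}$, for some absolute constant $c_1<1$.
   Context: Cascade process with $p=1$ and rate $\lambda$ from a source $s$: every edge receives an independent length drawn from $\mathrm{Exp}(\lambda)$; the infection time $t(v)$ is the shortest-path distance from $s$. A complete trace records the infection time of every node; $t_i(v)$ denotes the infection time of $v$ in trace $T_i$. Algorithm 1 (tree reconstruction): for every pair of nodes $u,v$, let $c(u,v)$ be the median of $\{|t_i(u)-t_i(v)|\}_{i=1}^{\ell}$; if there exist a node $q$ and traces $T_i,T_j$ with $t_i(q)<t_i(u)<t_i(v)$ and $t_j(q)<t_j(v)<t_j(u)$, set $c(u,v)=\infty$. Output the minimum spanning tree of the complete graph on $V$ with respect to the costs $c(u,v)$. *)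

From HB Require Import structures.
From mathcomp Require Import all_boot all_order all_algebra.
From mathcomp Require Import all_classical all_reals all_analysis.
Set Implicit Arguments.
Unset Strict Implicit.
Unset Printing Implicit Defensive.
Import Order.TTheory GRing.Theory Num.Theory.

Local Open Scope ring_scope.

Definition simple_graph (V : finType) (e : rel V) : Prop :=
  symmetric e /\ irreflexive e.

Definition is_tree (V : finType) (e : rel V) : Prop :=
  [/\ simple_graph e,
      (forall x y : V, connect e x y) &
      (forall p : seq V, (3 <= size p)%N -> ~~ (cycle e p && uniq p))].

Definition is_edgeb (V : finType) (e : rel V) (A : {set V}) : bool :=
  [exists x, exists y, e x y && (A == [set x; y])].

Definition edge (V : finType) (e : rel V) := {A : {set V} | is_edgeb e A}.

(* Length of the pair (a,b) under an edge-length assignment L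
   (0 if {a,b} is not an edge; only used on edges). *)
Definition elen (R : realType) (V : finType) (e : rel V) (L : edge e -> R)
    (a b : V) : R :=
  match (insub [set a; b] : option (edge e)) with
  | Some E => L E
  | None => 0
  end.

Definition walk_len (R : realType) (V : finType) (e : rel V)
    (L : edge e -> R) (s : V) (p : seq V) : R :=
  \sum_(x <- pairmap (elen L) s p) x.

Definition spdist (R : realType) (V : finType) (e : rel V)
    (L : edge e -> R) (s v : V) : R :=
  inf [set w : R | exists p : seq V,
         [/\ path e s p, last s p = v & w = walk_len L s p]]%classic.

(* Median of a list: the element of index (size l)/2 of the sorted list
   (the middle element for odd size, the upper median for even size). *)
Definition median (R : realType) (l : seq R) : R :=
  nth 0 (sort <=%R l) ((size l) %/ 2)%N.

(* The cost c(u,v) set by Algorithm 1, given the infection times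
   t i x of node x in trace T_i (i < l). *)
Definition alg1_cost (R : realType) (V : finType) (l : nat)
    (t : 'I_l -> V -> R) (u v : V) : \bar R :=
  if [exists q : V, exists i : 'I_l, exists j : 'I_l,
        (t i q < t i u < t i v) && (t j q < t j v < t j u)]
  then +oo%E
  else (median [seq `|t i u - t i v| | i <- enum 'I_l])%:E.

Definition mutually_independent (R : realType) (d : measure_display)
    (T : measurableType d) (P : probability T R) (I : finType)
    (X : I -> {RV P >-> R}) : Prop :=
  forall B : I -> set R, (forall k, measurable (B k)) ->
    P [set w | forall k, B k (X k w)]%classic =
      (\prod_(k : I) P (X k @^-1` B k)%classic)%E.

From HB Require Import structures.
From mathcomp Require Import all_boot all_order all_algebra.
From mathcomp Require Import all_classical all_reals all_analysis.
From mathcomp Require Import measurable_realfun.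
From mathcomp Require Import ring lra zify.
Import Order.TTheory GRing.Theory Num.Theory.

(* Removing the edge uv splits the tree into the side of u and the side of v.  With
   nonnegative edge lengths every path from a source to the other side runs through
   both u and v, so a trace reaches the endpoint on the source's side first, and every
   node reached before that endpoint lies on the source's side.  Hence two traces that
   reach u and v in opposite orders cannot have a common node infected before both,
   and Algorithm 1 never sets c(u,v) to infinity.  What remains is the median of
   |t_i(u) - t_i(v)| <= L_i(uv), which is below 1/lam as soon as more than half of the
   independent Exp(lam) lengths L_i(uv) are at most 9/(10 lam), an event of
   probability 1 - e^(-9/10) > 1/2 for each trace.  Each of the at most 2^l
   configurations of long edges violating this has probability at most (999/2000)^l. *)

Set Implicit Arguments.
Unset Strict Implicit.
Unset Printing Implicit Defensive.
Local Open Scope classical_set_scope.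
Local Open Scope ring_scope.

Section EdgeCut.
Variables (V : finType) (e : rel V) (u v : V).
Hypothesis e_sym : symmetric e.

Definition deledge : rel V := fun a b => e a b && ([set a; b]%SET != [set u; v]%SET).

Definition vside (x : V) : bool := connect deledge x v.

Lemma deledge_sym : symmetric deledge.
Proof. by move=> a b; rewrite /deledge e_sym finset.setUC. Qed.

Lemma vside_crossing a b : e a b -> vside a != vside b ->
  [set a; b]%SET = [set u; v]%SET.
Proof.
move=> eab; apply: contraNeq => ab_ne_uv; apply/eqP.
have ab : deledge a b by rewrite /deledge eab.
exact: (same_connect (sym_connect_sym deledge_sym) (connect1 ab) v).
Qed.

Lemma path_crosses_cut s p : path e s p -> vside s != vside (last s p) ->
  (u \in s :: p) && (v \in s :: p).
Proof.
elim: p s => [|y p IH] s /=; first by rewrite eqxx.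
case/andP=> esy py; have [same|cross] := eqVneq (vside s) (vside y).
  rewrite same => /(IH y py)/andP[uyp vyp].
  by rewrite !(in_cons s) uyp vyp !orbT.
have /setP uv := vside_crossing esy cross.
have := uv u; have := uv v; rewrite !in_set2 !eqxx orbT /=.
by move=> /orP[]/eqP-> /orP[]/eqP->; rewrite !inE !eqxx ?orbT.
Qed.

Hypothesis e_irr : irreflexive e.
Hypothesis e_acyclic :
  forall p : seq V, (3 <= size p)%N -> ~~ (cycle e p && uniq p).
Hypothesis e_uv : e u v.

(* A path from u to v avoiding the edge uv would close a cycle with that edge. *)
Lemma vsideNu : ~~ vside u.
Proof.
apply/negP => /connectP [p up_path p_last].
case: (shortenP up_path) p_last => q uq_path q_uniq _ q_last.
have q_size : (3 <= size (u :: q))%N.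
  case: q uq_path q_uniq q_last => [|y [|z q]] //=.
  - by move=> _ _ vu; move: e_uv; rewrite vu e_irr.
  - by rewrite /deledge => /andP[/andP[_ uy_uv] _] _ vy; move: uy_uv; rewrite -vy eqxx.
move/negP: (e_acyclic q_size); apply; apply/andP; split=> //.
rewrite /= rcons_path -q_last e_sym e_uv andbT.
by apply: sub_path uq_path => a b /andP[].
Qed.

End EdgeCut.

Section Walks.
Variables (R : realType) (V : finType) (e : rel V) (L : edge e -> R).

Lemma walk_len_cons s y p : walk_len L s (y :: p) = elen L s y + walk_len L y p.
Proof. by rewrite /walk_len /= big_cons. Qed.

Lemma walk_len_cat s p1 p2 :
  walk_len L s (p1 ++ p2) = walk_len L s p1 + walk_len L (last s p1) p2.
Proof. by rewrite /walk_len pairmap_cat big_cat. Qed.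

Lemma elen_edge a b (E : edge e) : val E = [set a; b]%SET -> elen L a b = L E.
Proof.
move=> Eab; rewrite /elen; case: insubP => [E' _ E'ab|].
- by congr L; apply: val_inj; rewrite E'ab Eab.
- by rewrite -Eab (valP E).
Qed.

Hypothesis L_ge0 : forall E, 0 <= L E.

Lemma elen_ge0 a b : 0 <= elen L a b.
Proof. by rewrite /elen; case: insub. Qed.

Lemma walk_len_ge0 s p : 0 <= walk_len L s p.
Proof.
elim: p s => [|y p IH] s; first by rewrite /walk_len big_nil.
by rewrite walk_len_cons addr_ge0 ?elen_ge0.
Qed.

Let walks s x := [set w : R | exists p : seq V,
  [/\ path e s p, last s p = x & w = walk_len L s p]].

Let walks_lbound s x : has_lbound (walks s x).
Proof. by exists 0 => w [p [_ _ ->]]; exact: walk_len_ge0. Qed.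

Let walks_neq0 s x : connect e s x -> walks s x !=set0.
Proof. by case/connectP => p pp lp; exists (walk_len L s p); exists p. Qed.

Lemma spdist_le_walk s p : path e s p -> spdist L s (last s p) <= walk_len L s p.
Proof. by move=> pp; apply: (ge_inf (walks_lbound s _)); exists p. Qed.

Lemma spdist_le_through s x y : connect e s x ->
  (forall p, path e s p -> last s p = x -> y \in s :: p) ->
  spdist L s y <= spdist L s x.
Proof.
move=> sx through_y; apply: lb_le_inf (walks_neq0 sx) _ => _ [p [pp lp ->]].
have := through_y p pp lp; move: pp => /[swap]; case/splitPl => p1 p2 lp1.
rewrite cat_path walk_len_cat -lp1 => /andP[pp1 _].
by rewrite (le_trans (spdist_le_walk pp1)) // lerDl walk_len_ge0.
Qed.

Lemma spdist_le_edge s a b : connect e s a -> e a b ->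
  spdist L s b <= spdist L s a + elen L a b.
Proof.
move=> sa eab; rewrite -lerBlDr.
apply: lb_le_inf (walks_neq0 sa) _ => _ [p [pp lp ->]]; rewrite lerBlDr.
have pb : path e s (rcons p b) by rewrite rcons_path pp lp eab.
have := spdist_le_walk pb; rewrite last_rcons -cats1 walk_len_cat lp.
by rewrite walk_len_cons /walk_len big_nil addr0.
Qed.

End Walks.

Lemma count_enumT (T : finType) (P : pred T) : count P (enum T) = #|P|.
Proof.
rewrite -size_filter -(card_uniqP _); last exact/filter_uniq/enum_uniq.
by apply: eq_card => x; rewrite mem_filter mem_enum andbT.
Qed.

Lemma card_gtE (T : finType) (P : pred T) k :
  (k < #|P|)%N = [exists S : {set T}, (k < #|S|)%N && [forall i in S, P i]].
Proof.
apply/idP/existsP => [kP|[S /andP[kS /forall_inP SP]]].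
  by exists [set i | P i]%SET; rewrite cardsE kP; apply/forall_inP => i; rewrite inE.
by rewrite (leq_trans kS) // subset_leq_card //; apply/fintype.subsetP => i /SP.
Qed.

Lemma median_ltE (R : realType) (s : seq R) c : (0 < size s)%N ->
  (median s < c) = (size s %/ 2 < count (< c) s)%N.
Proof.
move=> s_gt0; rewrite /median; apply/idP/idP => [|lt_c]; last first.
  by apply: nth_count_lt; rewrite ?sort_le_sorted ?count_sort.
apply: contraTT; rewrite -leqNgt -leNgt => le_c.
by apply: nth_count_ge; rewrite ?sort_le_sorted ?count_sort ?size_sort ?le_c ?ltn_Pdiv.
Qed.

Lemma alg1_cost_ltE (R : realType) (V : finType) (l : nat) (t : 'I_l -> V -> R)
    (u v : V) c : (0 < l)%N ->
  (alg1_cost t u v < c%:E)%E =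
  ~~ [exists q, exists i, exists j,
        (t i q < t i u < t i v) && (t j q < t j v < t j u)] &&
  (l %/ 2 < #|[pred i | (`|t i u - t i v| < c)%R]|)%N.
Proof.
move=> l_gt0; rewrite /alg1_cost; case: ifP => _ /=; first by rewrite ltNge leey.
by rewrite lte_fin median_ltE size_map size_enum_ord // count_map count_enumT.
Qed.

Section TreeDist.
Variables (R : realType) (V : finType) (e : rel V) (u v : V).
Hypothesis e_sym : symmetric e.
Hypothesis e_conn : forall x y : V, connect e x y.

Lemma spdist_across_cut (L : edge e -> R) s x : (forall E, 0 <= L E) ->
  vside e u v s != vside e u v x ->
  spdist L s u <= spdist L s x /\ spdist L s v <= spdist L s x.
Proof.
move=> L_ge0 cut; split; apply: spdist_le_through => // p pp lp;
  by have := path_crosses_cut (u := u) (v := v) e_sym pp; rewrite lp => /(_ cut)/andP[].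
Qed.

Lemma vside_source_lt (L : edge e -> R) s x y : (forall E, 0 <= L E) ->
  spdist L s x < spdist L s y -> (y == u) || (y == v) ->
  vside e u v s = vside e u v x.
Proof.
move=> L_ge0 lt_xy y_uv; apply/eqP/negP => /negP cut; move: lt_xy.
have [le_ux le_vx] := spdist_across_cut L_ge0 cut.
by case/orP: y_uv => /eqP->; rewrite ltNge ?le_ux ?le_vx.
Qed.

Hypothesis e_irr : irreflexive e.
Hypothesis e_acyclic :
  forall p : seq V, (3 <= size p)%N -> ~~ (cycle e p && uniq p).
Hypothesis e_uv : e u v.

(* In a tree, the order in which u and v are reached tells on which side of the
   edge uv the source lies, and every node reached before both lies on that side. *)
Lemma no_flag (Li Lj : edge e -> R) si sj q :
  (forall E, 0 <= Li E) -> (forall E, 0 <= Lj E) ->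
  ~~ ((spdist Li si q < spdist Li si u < spdist Li si v) &&
      (spdist Lj sj q < spdist Lj sj v < spdist Lj sj u)).
Proof.
move=> Li_ge0 Lj_ge0; apply/negP => /andP[/andP[qu_i uv_i] /andP[qv_j vu_j]].
have [si_q si_u] : vside e u v si = vside e u v q /\ vside e u v si = vside e u v u.
  by split; [apply: (vside_source_lt Li_ge0 qu_i) | apply: (vside_source_lt Li_ge0 uv_i)];
    rewrite ?eqxx ?orbT.
have [sj_q sj_v] : vside e u v sj = vside e u v q /\ vside e u v sj = vside e u v v.
  by split; [apply: (vside_source_lt Lj_ge0 qv_j) | apply: (vside_source_lt Lj_ge0 vu_j)];
    rewrite ?eqxx ?orbT.
have : vside e u v u = vside e u v v by rewrite -si_u si_q -sj_q sj_v.
by rewrite (negbTE (vsideNu e_sym e_irr e_acyclic e_uv)) /vside connect0.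
Qed.

Lemma alg1_cost_lt_short (l : nat) (L : 'I_l -> edge e -> R) (s : 'I_l -> V)
    (Euv : edge e) c :
  (forall i E, 0 <= L i E) -> val Euv = [set u; v]%SET ->
  (l %/ 2 < #|[pred i | (L i Euv < c)%R]|)%N ->
  (alg1_cost (fun i y => spdist (L i) (s i) y) u v < c%:E)%E.
Proof.
move=> L_ge0 Euv_uv short.
have [i0 _] : exists i, i \in [pred i | L i Euv < c].
  by apply/card_gt0P; exact: leq_ltn_trans (leq0n _) short.
rewrite alg1_cost_ltE ?(leq_ltn_trans (leq0n i0) (ltn_ord i0)) //.
apply/andP; split.
  apply/existsPn => q; apply/existsPn => i; apply/existsPn => j.
  exact: no_flag (L_ge0 i) (L_ge0 j).
apply: leq_trans short _; apply: subset_leq_card; apply/fintype.subsetP => i.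
rewrite !inE => /(le_lt_trans _); apply.
have Euv_vu : val Euv = [set v; u]%SET by rewrite Euv_uv finset.setUC.
have := spdist_le_edge (L_ge0 i) (e_conn (s i) u) e_uv.
have := spdist_le_edge (L_ge0 i) (e_conn (s i) v) (_ : e v u).
rewrite (elen_edge _ Euv_uv) (elen_edge _ Euv_vu) e_sym e_uv ler_norml => /(_ isT) ? ?.
by apply/andP; split; lra.
Qed.

End TreeDist.

Section Measurability.
Variables (R : realType) (d : measure_display) (Omega : measurableType d).

Lemma measurable_true_set (b : Omega -> bool) :
  measurable_fun setT b -> measurable [set w | b w].
Proof. by move=> mb; have := mb measurableT [set true] I; rewrite setTI. Qed.

Lemma measurable_bigcup_count (I : countType) (W : set I) (F : I -> set Omega) :
  (forall i, measurable (F i)) -> measurable (\bigcup_(i in W) F i).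
Proof.
move=> mF; rewrite bigcup_mkcond; apply: countable_bigcupT_measurable.
  exact: countableP.
by move=> i; case: ifP.
Qed.

Lemma measurable_bigcap_count (I : countType) (W : set I) (F : I -> set Omega) :
  (forall i, measurable (F i)) -> measurable (\bigcap_(i in W) F i).
Proof.
move=> mF; rewrite -[X in measurable X]setCK setC_bigcap; apply: measurableC.
by apply: measurable_bigcup_count => i; exact: measurableC.
Qed.

Lemma has_lbound_nat (A : set R) :
  has_lbound A <-> exists n : nat, forall x, A x -> - n%:R <= x.
Proof.
split=> [[M AM]|[n An]]; last by exists (- n%:R).
exists (Num.truncn (- M)).+1 => x /AM; apply: le_trans.
by rewrite lerNl ltW // truncnS_gt.
Qed.

Lemma measurable_fun_inf (I : countType) (W : set I) (f : I -> Omega -> R) :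
  W !=set0 -> (forall i, measurable_fun setT (f i)) ->
  measurable_fun setT (fun w => inf [set f i w | i in W]).
Proof.
move=> [i0 Wi0] mf.
apply: (measurability _ (RGenInftyO.measurableE R)) => //= _ [_ [c ->] <-].
have mcst (r : R) : measurable_fun setT (cst r : Omega -> R).
  exact: measurable_cst.
pose bounded := \bigcup_(n in [set: nat])
  \bigcap_(i in W) [set w | - n%:R <= f i w].
have boundedE w : bounded w <-> has_lbound [set f i w | i in W].
  rewrite has_lbound_nat; split=> -[n] => [_|] Bn; exists n => //.
    by move=> _ [i Wi <-]; exact: Bn.
  by move=> i Wi; apply: Bn; exists i.
have fne w : [set f i w | i in W] !=set0 by exists (f i0 w), i0.
have -> : setT `&` (fun w => inf [set f i w | i in W]) @^-1` `]-oo, c[ =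
    (bounded `&` \bigcup_(i in W) [set w | f i w < c]) `|`
    (~` bounded `&` [set w | cst 0 w < cst c w]).
  apply/seteqP; split=> w /=; rewrite in_itv /=.
  - move=> [_ infc]; have [bw|nbw] := pselect (bounded w).
      left; split=> //; have [_ [i Wi <-] fic] := inf_lt (fne w) infc.
      by exists i.
    by right; split=> //; rewrite -(inf_out (fun h => nbw ((boundedE w).2 h.2))).
  - move=> [[/boundedE bw [i Wi fic]]|[nbw c0]]; split=> //.
      by apply: le_lt_trans fic; apply: (ge_inf bw); exists i.
    by rewrite inf_out // => -[_ /(boundedE w).2].
apply: measurableU; apply: measurableI; last exact/measurable_true_set/measurable_fun_ltr.
- apply: measurable_bigcup_count => n.
  by apply: measurable_bigcap_count => i; exact/measurable_true_set/measurable_fun_ler.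
- by apply: measurable_bigcup_count => i; exact/measurable_true_set/measurable_fun_ltr.
- apply: measurableC; apply: measurable_bigcup_count => n.
  by apply: measurable_bigcap_count => i; exact/measurable_true_set/measurable_fun_ler.
Qed.

End Measurability.

Section MeasurableEvents.
Variables (R : realType) (d : measure_display) (Omega : measurableType d).

Lemma measurable_fun_existsb (T : finType) (P : T -> Omega -> bool) :
  (forall x, measurable_fun setT (P x)) ->
  measurable_fun setT (fun w => [exists x, P x w]).
Proof.
move=> mP; apply: (measurable_fun_bool true) => //.
have -> : setT `&` (fun w => [exists x, P x w]) @^-1` [set true] =
    \bigcup_(x in [set: T]) (setT `&` P x @^-1` [set true]).
  apply/seteqP; split => w /=.
    by case=> _ /existsP [x Pxw]; exists x.
  by case=> x _ [_ Pxw]; split => //; apply/existsP; exists x.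
by apply: fin_bigcup_measurable => // x _; exact: mP.
Qed.

Lemma measurable_fun_forallb (T : finType) (P : T -> Omega -> bool) :
  (forall x, measurable_fun setT (P x)) ->
  measurable_fun setT (fun w => [forall x, P x w]).
Proof.
move=> mP; rewrite (_ : (fun w => _) = (fun w => ~~ [exists x, ~~ P x w])).
  by apply/measurable_neg/measurable_fun_existsb => x; exact: measurable_neg.
by apply/funext => w; rewrite negb_exists; apply: eq_forallb => x; rewrite negbK.
Qed.

Lemma measurable_fun_card_gt (T : finType) (P : T -> Omega -> bool) k :
  (forall x, measurable_fun setT (P x)) ->
  measurable_fun setT (fun w => (k < #|[pred x | P x w]|)%N).
Proof.
move=> mP; have -> : (fun w => (k < #|[pred x | P x w]|)%N) = fun w =>
    [exists S : {set T}, (k < #|S|)%N && [forall x in S, P x w]].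
  by apply/funext => w; rewrite card_gtE.
apply: measurable_fun_existsb => S; apply: measurable_and => //.
apply: measurable_fun_forallb => x.
rewrite (_ : (fun w => _) = (fun w => ~~ (x \in S) || P x w)).
  exact: measurable_or.
by apply/funext => w; rewrite implybE.
Qed.

Variables (V : finType) (e : rel V) (L : Omega -> edge e -> R).
Hypothesis mL : forall E, measurable_fun setT (L^~ E).

Lemma measurable_walk_len s p : measurable_fun setT (fun w => walk_len (L w) s p).
Proof.
elim: p s => [|y p IH] s.
  have -> : (fun w => walk_len (L w) s [::]) = cst 0.
    by apply/funext => w; rewrite /walk_len big_nil.
  exact: measurable_cst.
have -> : (fun w => walk_len (L w) s (y :: p)) =
    (fun w => elen (L w) s y) \+ (fun w => walk_len (L w) y p).
  by apply/funext => w; rewrite walk_len_cons.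
by apply: measurable_funD => //; rewrite /elen; case: insub.
Qed.

Lemma measurable_spdist s x : connect e s x ->
  measurable_fun setT (fun w => spdist (L w) s x).
Proof.
case/connectP => p0 p0_path p0_last.
have -> : (fun w => spdist (L w) s x) = (fun w => inf
     [set walk_len (L w) s p | p in [set p | path e s p /\ last s p = x]]).
  apply/funext => w; congr inf; apply/seteqP; split => y /=.
  - by case=> p [pp lp ->]; exists p.
  - by case=> p [pp lp] <-; exists p.
apply: measurable_fun_inf; first by exists p0.
exact: measurable_walk_len.
Qed.

End MeasurableEvents.

Lemma measurable_cost_lt (R : realType) (d : measure_display)
    (Omega : measurableType d) (V : finType) (l : nat)
    (t : 'I_l -> V -> Omega -> R) (u v : V) c :
  (0 < l)%N -> (forall i x, measurable_fun setT (t i x)) ->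
  measurable [set w | (alg1_cost (fun i x => t i x w) u v < c%:E)%E].
Proof.
move=> l_gt0 mt; apply: measurable_true_set.
rewrite (_ : (fun w => _) = fun w => ~~ [exists q, exists i, exists j,
   (t i q w < t i u w < t i v w) && (t j q w < t j v w < t j u w)] &&
   (l %/ 2 < #|[pred i | (`|t i u w - t i v w| < c)%R]|)%N); last first.
  by apply/funext => w; rewrite alg1_cost_ltE.
apply: measurable_and; last first.
  apply: measurable_fun_card_gt => i; apply: measurable_fun_ltr => //.
  by apply: measurableT_comp => //; exact: measurable_funB.
apply/measurable_neg/measurable_fun_existsb => q.
apply: measurable_fun_existsb => i; apply: measurable_fun_existsb => j.
by apply: measurable_and; apply: measurable_and; apply: measurable_fun_ltr.
Qed.

Section ExponentialTail.
Variables (R : realType) (d : measure_display) (Omega : measurableType d).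
Variables (P : probability Omega R) (lam : R) (X : {RV P >-> R}).
Hypothesis X_exp : forall A, measurable A ->
  distribution P X A = exponential_prob lam A.

Let PX A : measurable A -> P (X @^-1` A) = exponential_prob lam A.
Proof. exact: X_exp. Qed.

Let mX := @measurable_funPTI _ _ _ _ X.

Lemma exponential_nonneg : P (X @^-1` `[0, +oo[) = 1%E.
Proof.
have -> : X @^-1` `[0, +oo[ = ~` (X @^-1` `]-oo, 0[).
  by apply/seteqP; split => w /=; rewrite !in_itv /= andbT leNgt => /negP.
rewrite probability_setC; last exact: mX.
rewrite PX // /exponential_prob integral0_eq ?sube0 // => y.
by rewrite /= in_itv /= => y_lt0; rewrite lt0_exponential_pdf.
Qed.

Lemma exponential_itv0c (x : R) : 0 < x ->
  P (X @^-1` `[0, x]) = (1 - (expR (- lam * x))%:E)%E.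
Proof. by move=> x_gt0; rewrite PX // exponential_prob_itv0c. Qed.

Lemma exponential_tail (x : R) : 0 < x ->
  P (X @^-1` `]x, +oo[) = (expR (- lam * x))%:E.
Proof.
move=> x_gt0.
have nonneg_split : X @^-1` `[0, x] `|` X @^-1` `]x, +oo[ = X @^-1` `[0, +oo[.
  apply/seteqP; split => w /=; rewrite !in_itv /= ?andbT.
  - by case=> [/andP[]|/ltW] // xw; exact: le_trans (ltW x_gt0) xw.
  - by move=> w_ge0; case: (leP (X w) x) => xw; [left; rewrite w_ge0 | right].
have disj : X @^-1` `[0, x] `&` X @^-1` `]x, +oo[ = set0.
  apply/seteqP; split => w //= []; rewrite !in_itv /= andbT.
  by case/andP => _ wx /(le_lt_trans wx); rewrite ltxx.
have P_itv0c : P (X @^-1` `[0, x]) = (1 - (expR (- lam * x))%:E)%E.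
  exact: exponential_itv0c.
have := exponential_nonneg.
rewrite -nonneg_split measureU //= ?P_itv0c; try by apply: mX; exact: measurable_itv.
move: (P (X @^-1` `]x, +oo[)) (measure_ge0 P (X @^-1` `]x, +oo[)) => [r| |] //= _.
by rewrite -!EFinD => -[sum1]; congr EFin; lra.
Qed.

End ExponentialTail.

Lemma weight_le (R : realFieldType) (p : R) (a b : nat) :
  0 <= p <= 1000%:R / 2197%:R -> (b <= a)%N ->
  p ^+ a * (1 - p) ^+ b <= (999%:R / 2000%:R) ^+ (a + b).
Proof.
move=> /andP[p_ge0 p_le] ba; set m : R := 999%:R / 2000%:R.
have m_ge0 : 0 <= m by rewrite /m; lra.
have p_le_m : p <= m by rewrite /m; lra.
have pq_ge0 : 0 <= p * (1 - p) by apply: mulr_ge0 => //; lra.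
have pq_le : p * (1 - p) <= m ^+ 2 by rewrite /m expr2; nra.
have -> : p ^+ a * (1 - p) ^+ b = p ^+ (a - b) * (p * (1 - p)) ^+ b.
  by rewrite exprMn mulrA -exprD subnK.
have -> : m ^+ (a + b) = m ^+ (a - b) * (m ^+ 2) ^+ b.
  by rewrite -exprM -exprD; congr (_ ^+ _); lia.
by apply: ler_pM; rewrite ?exprn_ge0 //; apply: lerXn2r; rewrite ?nnegrE ?exprn_ge0.
Qed.

Lemma expR_neg9_10_le (R : realType) :
  expR (- (9%:R / 10%:R)) <= 1000%:R / 2197%:R :> R.
Proof.
have e_ge : 2197%:R / 1000%:R <= expR (9%:R / 10%:R : R).
  have -> : (9%:R / 10%:R : R) = 3%:R / 10%:R * 3%:R by lra.
  have e_ge : 13%:R / 10%:R <= expR (3%:R / 10%:R : R).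
    by have := expR_ge1Dx (3%:R / 10%:R : R); lra.
  have : (13%:R / 10%:R : R) ^+ 3 <= expR (3%:R / 10%:R : R) ^+ 3.
    by apply: lerXn2r; rewrite ?nnegrE ?(ltW (expR_gt0 _)) //; lra.
  by rewrite expRM_natr !exprS expr0; lra.
rewrite expRN; apply: (@le_trans _ _ (2197%:R / 1000%:R)^-1); last by rewrite invf_div.
by rewrite lef_pV2 ?posrE ?expR_gt0 ?divr_gt0 ?ltr0n.
Qed.

Lemma card_sets (T : finType) : #|{set T}| = (2 ^ #|T|)%N.
Proof.
have := card_powerset [set: T]%SET; rewrite cardsT => <-.
by apply: eq_card => S; rewrite powersetE finset.subsetT.
Qed.

Lemma le_measure_bigcup_fin (R : realType) (d : measure_display)
    (Omega : measurableType d) (mu : {measure set Omega -> \bar R})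
    (K : finType) (F : K -> set Omega) :
  (forall k, measurable (F k)) -> (mu (\bigcup_k F k) <= \sum_k mu (F k))%E.
Proof.
move=> mF; have := @content_sub_fsum _ _ _ mu K [set: K] _ F finite_finset.
rewrite (fsbigE (enum K)) ?enum_uniq // => [|k _]; last by rewrite mem_enum.
rewrite (eq_bigl xpredT) => [|k]; last by rewrite in_setT.
rewrite big_enum; apply.
- by move=> k _; exact: mF.
- by apply: fin_bigcup_measurable => // k _; exact: mF.
- by [].
Qed.

Lemma lee_sum_const (R : realType) (K : finType) (f : K -> \bar R) (c : R) :
  (forall k, (f k <= c%:E)%E) -> (\sum_k f k <= (c *+ #|K|)%:E)%E.
Proof.
move=> f_le; apply: le_trans (lee_sum _ (fun k _ => f_le k)) _.
by rewrite sumEFin sumr_const.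
Qed.

Section ExceedEvents.
Variables (R : realType) (d : measure_display) (Omega : measurableType d).
Variables (P : probability Omega R) (I J : finType) (j0 : J).
Variables (X : I * J -> {RV P >-> R}) (lam x : R).
Hypothesis x_gt0 : 0 < x.
Hypothesis X_indep : mutually_independent X.
Hypothesis X_exp : forall k A, measurable A ->
  distribution P (X k) A = exponential_prob lam A.

Definition exceed_range (S : {set I}) (k : I * J) : set R :=
  [set` if k.2 == j0 then (if k.1 \in S then `]x, +oo[ else `[0, x]) else `[0, +oo[]%R.

Definition exceed_event (S : {set I}) : set Omega :=
  [set w | forall k, exceed_range S k (X k w)].

Lemma measurable_exceed_range S k : measurable (exceed_range S k).
Proof.
by rewrite /exceed_range; case: ifP => _; [case: ifP => _|]; exact: measurable_itv.
Qed.

Lemma measurable_exceed_event S : measurable (exceed_event S).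
Proof.
have -> : exceed_event S = \bigcap_(k in [set: I * J]) X k @^-1` exceed_range S k.
  by apply/seteqP; split => w /= Sw k => [_|]; apply: Sw.
apply: fin_bigcap_measurable => // k _.
by apply: measurable_funPTI; exact: measurable_exceed_range.
Qed.

Lemma prob_exceed_event S : P (exceed_event S) =
  (expR (- lam * x) ^+ #|S| * (1 - expR (- lam * x)) ^+ #|~: S|)%:E.
Proof.
rewrite /exceed_event (X_indep (measurable_exceed_range S)).
set q := expR (- lam * x).
transitivity (\prod_(k : I * J)
   (if k.2 == j0 then (if k.1 \in S then q else 1 - q) else 1)%:E)%E.
  apply: eq_bigr => -[i j] _; rewrite /exceed_range /=.
  case: ifP => _; [case: ifP => _|].
  - exact (exponential_tail (X_exp (i, j)) x_gt0).
  - rewrite EFinB; exact (exponential_itv0c (X_exp (i, j)) x_gt0).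
  - exact (exponential_nonneg (X_exp (i, j))).
rewrite prodEFin; congr EFin.
transitivity (\prod_i \prod_(j : J)
   (if j == j0 then (if i \in S then q else 1 - q) else 1)).
  by rewrite pair_bigA.
under eq_bigr do rewrite -big_mkcond big_pred1_eq.
rewrite (bigID (mem S)) /= (eq_bigr (fun=> q)) => [|i ->] //.
rewrite [X in _ * X](eq_bigr (fun=> 1 - q)) => [|i /negbTE ->] //.
by rewrite !prodr_const; congr (_ * _ ^+ _); apply: eq_card => i; rewrite !inE.
Qed.

Lemma exceed_eventE S w : exceed_event S w ->
  [pred i | X (i, j0) w <= x] =i ~: S.
Proof.
move=> Sw i; rewrite finset.in_setC inE; have := Sw (i, j0).
rewrite /exceed_range /= eqxx.
case: (i \in S); rewrite /= in_itv /= ?andbT; first exact: lt_geF.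
by case/andP.
Qed.

Lemma exceed_event_witness w : (forall k, 0 <= X k w) ->
  exceed_event [set i | x < X (i, j0) w]%SET w.
Proof.
move=> X_ge0 [i j]; rewrite /exceed_range /= inE.
case: (j =P j0) => [->|_]; last by rewrite /= in_itv /= andbT.
by case: (ltP x (X (i, j0) w)) => xX; rewrite in_itv /= ?xX ?X_ge0.
Qed.

Lemma prob_nonneg : P [set w | forall k, 0 <= X k w] = 1%E.
Proof.
have -> : [set w | forall k, 0 <= X k w] =
    [set w | forall k, [set` `[0, +oo[%R] (X k w)].
  by apply/seteqP; split => w /= X_ge0 k; move: (X_ge0 k); rewrite in_itv /= andbT.
rewrite (X_indep (fun _ => measurable_itv _)).
by apply: big1 => k _; exact (exponential_nonneg (X_exp k)).
Qed.

Definition short_majority (w : Omega) : bool :=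
  [forall k, 0 <= X k w] && (#|I| %/ 2 < #|[pred i | (X (i, j0) w <= x)%R]|)%N.

Lemma measurable_short_majority : measurable [set w | short_majority w].
Proof.
apply/measurable_true_set/measurable_and.
  apply: measurable_fun_forallb => k.
  by apply: measurable_fun_ler => //; exact: measurable_cst.
by apply: measurable_fun_card_gt => i; exact: measurable_fun_ler.
Qed.

Definition minority_event (S : {set I}) : set Omega :=
  if (#|~: S| <= #|I| %/ 2)%N then exceed_event S else set0.

Lemma measurable_minority_event S : measurable (minority_event S).
Proof.
by rewrite /minority_event; case: ifP => _; [exact: measurable_exceed_event | exact: measurable0].
Qed.

Lemma nonneg_setD_minority :
  [set w | forall k, 0 <= X k w] `\` \bigcup_S minority_event S `<=`
  [set w | short_majority w].
Proof.
move=> w [X_ge0 minor]; have Sw := exceed_event_witness X_ge0.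
apply/andP; split; first exact/forallP.
rewrite (eq_card (exceed_eventE Sw)) ltnNge; apply/negP => large; apply: minor.
by exists [set i | x < X (i, j0) w]%SET => //; rewrite /minority_event large.
Qed.

Hypothesis q_le : expR (- lam * x) <= 1000%:R / 2197%:R.

Lemma prob_minority_event S :
  (P (minority_event S) <= ((999%:R / 2000%:R) ^+ #|I|)%:E)%E.
Proof.
have c_ge0 : (0 : R) <= (999%:R / 2000%:R) ^+ #|I| by apply: exprn_ge0; lra.
rewrite /minority_event; case: ifP => [large|_]; last by rewrite measure0 lee_fin.
rewrite prob_exceed_event lee_fin -(cardsC S); apply: weight_le.
  by rewrite q_le ltW ?expR_gt0.
by move: large; rewrite -(cardsC S); lia.
Qed.

Lemma prob_minority : (P (\bigcup_S minority_event S) <= ((999%:R / 1000%:R) ^+ #|I|)%:E)%E.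
Proof.
apply: le_trans (le_measure_bigcup_fin _ measurable_minority_event) _.
apply: le_trans (lee_sum_const prob_minority_event) _; rewrite lee_fin.
change ((999%:R / 2000%:R : R) ^+ #|I| *+ #|{set I}| <= (999%:R / 1000%:R) ^+ #|I|).
rewrite card_sets -mulr_natr natrX -exprMn.
by rewrite (_ : _ * 2%:R = 999%:R / 1000%:R) //; lra.
Qed.

Lemma prob_short_majority :
  ((1 - (999%:R / 1000%:R) ^+ #|I|)%:E <= P [set w | short_majority w])%E.
Proof.
pose N := [set w | forall k, 0 <= X k w]; pose U := \bigcup_S minority_event S.
have mU : measurable U.
  by apply: fin_bigcup_measurable => // S _; exact: measurable_minority_event.
have mN : measurable N.
  rewrite (_ : N = [set w | [forall k, 0 <= X k w]]); last first.
    by apply/seteqP; split => w /= => [X_ge0|/forallP //]; apply/forallP.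
  apply/measurable_true_set/measurable_fun_forallb => k.
  by apply: measurable_fun_ler => //; exact: measurable_cst.
apply: (@le_trans _ _ (P (N `\` U))); last first.
  apply: le_measure; rewrite ?inE; last exact: nonneg_setD_minority.
    exact: measurableD.
  exact: measurable_short_majority.
have PN : P N = 1%E := prob_nonneg.
rewrite measureD //; last exact: le_lt_trans (probability_le1 P mN) (ltry 1).
have -> : ((1 - (999%:R / 1000%:R) ^+ #|I|)%:E = 1 - ((999%:R / 1000%:R) ^+ #|I|)%:E)%E by [].
apply: leeB; first by rewrite -{1}PN.
apply: le_trans _ prob_minority; apply: le_measure; rewrite ?inE //; exact: measurableI.
Qed.

End ExceedEvents.

Unset Implicit Arguments.

Theorem lemma4 (R : realType) :
  exists c1 : R, 0 <= c1 < 1 /\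
  forall (V : finType) (e : rel V), is_tree e ->
  forall (lam : R), 0 < lam ->
  forall (l : nat) (s : 'I_l -> V)
         (d : measure_display) (Omega : measurableType d)
         (P : probability Omega R)
         (X : 'I_l * edge e -> {RV P >-> R}),
    mutually_independent X ->
    (forall k (A : set R), measurable A ->
       distribution P (X k) A = exponential_prob lam A) ->
    forall u v : V, e u v ->
      ((1 - c1 ^+ l)%:E <=
       P [set w | (alg1_cost
                     (fun (i : 'I_l) (x : V) =>
                        spdist (fun E : edge e => X (i, E) w) (s i) x) u v
                   < (lam^-1)%:E)%E])%E.
Proof.
exists (999%:R / 1000%:R); split; first by apply/andP; split; lra.
move=> V e [[e_sym e_irr] e_conn e_acyclic] lam lam_gt0 l s d Omega P X X_indep
  X_exp u v e_uv.
have [l0|l_gt0] := posnP l.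
  by rewrite (_ : _ ^+ l = 1) ?subrr ?measure_ge0 // l0 expr0.
have uv_edge : is_edgeb e [set u; v]%SET.
  by apply/existsP; exists u; apply/existsP; exists v; rewrite e_uv eqxx.
pose Euv : edge e := exist _ [set u; v]%SET uv_edge.
(* A threshold below [lam^-1] at which each length is still short with probability
   [1 - e^(-9/10) > 1/2]. *)
pose x := 9%:R / 10%:R / lam.
have x_gt0 : 0 < x by rewrite divr_gt0.
have x_lt : x < lam^-1 by rewrite /x -[ltRHS]mul1r ltr_pM2r ?invr_gt0 //; lra.
have q_le : expR (- lam * x) <= 1000%:R / 2197%:R.
  by rewrite mulNr mulrCA divff ?gt_eqF // mulr1 expR_neg9_10_le.
have := prob_short_majority Euv x_gt0 X_indep X_exp q_le.
rewrite card_ord => /le_trans; apply; apply: le_measure; rewrite ?inE.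
- exact: measurable_short_majority.
- by apply: measurable_cost_lt => // i y; apply: measurable_spdist.
move=> w; rewrite /= /short_majority card_ord => /andP[/forallP X_ge0 short].
apply: (alg1_cost_lt_short e_sym e_conn e_irr e_acyclic e_uv _ _ (Euv := Euv)).
- by move=> i E; exact: X_ge0.
- by [].
apply: leq_trans short _; apply: subset_leq_card; apply/fintype.subsetP => i.
by rewrite !inE => /le_lt_trans; apply.
Qed.
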